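(* Let $a_0,a_1,a_2\in\mathbb{C}$ with $a_2\neq0$ such that the polynomial $f(x)=a_0+a_1x+a_2x^2$ has no positive integer root, and let $\Lambda=a_0D+a_1DxD+a_2(Dx)^2D$. Then there is no monic polynomial sequence $\{B_n\}_{n\ge0}$ which is both $\Lambda$-Appell and orthogonal.
   Context: $\mathcal{P}$ is the space of complex polynomials, $D$ the derivative, $x$ multiplication by $x$, products are compositions. A monic polynomial sequence (MPS) is $\{B_n\}_{n\ge0}$ with $B_n$ monic of degree $n$. Under the hypotheses, $\Lambda$ is a lowering operator with $\Lambda(x^n)=nf(n)x^{n-1}$; an MPS is $\Lambda$-Appell if $\Lambda B_{n+1}=\rho_nB_n$ for all $n\ge0$ with $\rho_n=(n+1)f(n+1)$. An MPS is orthogonal if there is a linear functional $u$ on $\mathcal{P}$ with $\langle u,B_nB_m\rangle=0$ for $n\neq m$ and $\langle u,B_n^2\rangle\neq0$ for all $n\ge0$. *)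

From mathcomp Require Import all_boot all_algebra.
From mathcomp Require Import complex Rstruct.
Set Implicit Arguments. Unset Strict Implicit. Unset Printing Implicit Defensive.
Import GRing.Theory.
Local Open Scope ring_scope.

Definition C : numClosedFieldType := (Rdefinitions.R)[i].

Definition fpoly (a0 a1 a2 : C) : {poly C} := a0%:P + a1 *: 'X + a2 *: 'X^2.

(* Lambda = a0 D + a1 D x D + a2 (D x)^2 D, products = compositions,
   D = derivative, x = multiplication by 'X. *)
Definition Lambda (a0 a1 a2 : C) (p : {poly C}) : {poly C} :=
  a0 *: p^`() + a1 *: ('X * p^`())^`() + a2 *: ('X * ('X * p^`())^`())^`().

Definition rho (a0 a1 a2 : C) (n : nat) : C :=
  n.+1%:R * (fpoly a0 a1 a2).[n.+1%:R].

Definition MPS (B : nat -> {poly C}) : Prop :=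
  forall n, B n \is monic /\ size (B n) = n.+1.

Definition Lambda_Appell (a0 a1 a2 : C) (B : nat -> {poly C}) : Prop :=
  forall n, Lambda a0 a1 a2 (B n.+1) = rho a0 a1 a2 n *: B n.

Definition orthogonal_MPS (B : nat -> {poly C}) : Prop :=
  exists u : {linear {poly C} -> C^o},
    (forall n m : nat, n <> m -> u (B n * B m) = 0) /\
    (forall n : nat, u (B n * B n) != 0).

(** The coefficients of a Lambda-Appell sequence are forced by the first
    coefficients: Lambda lowers x^n to n f(n) x^(n-1), so writing
    lam m = m f(m), the coefficient of x^m in B_(k+m) is
    a constant alpha_k times lam(k+m) lam(k+m-1) ... lam(m+1), and lam never vanishes at
    positive integers.  Orthogonality gives a three-term recurrence
    x B_(n+1) = B_(n+2) + beta_n B_(n+1) + gamma_n B_n.  Comparing the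
    coefficients three and four steps below the diagonal yields identities
    which are polynomial of degree two in n, since lam is a cubic with leading
    coefficient a2 <> 0; their vanishing forces alpha_1 = alpha_2 = 0.  Hence
    B_0 = 1, B_1 = x, B_2 = x^2, and then u(B_2 B_0) = u(B_1 B_1), which
    contradicts orthogonality. *)
From mathcomp Require Import all_boot all_algebra.
From mathcomp Require Import complex Rstruct.
From mathcomp Require Import ring zify.
Import GRing.Theory Num.Theory.
Local Open Scope ring_scope.
Set Implicit Arguments. Unset Strict Implicit.

Section OrthogonalMPS.

Variables (F : fieldType) (B : nat -> {poly F}) (u : {linear {poly F} -> F^o}).
Hypothesis monicB : forall n, B n \is monic /\ size (B n) = n.+1.

Lemma coefB_diag n : (B n)`_n = 1.
Proof. by have [/monicP <- szB] := monicB n; rewrite lead_coefE szB. Qed.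

Lemma coefB_gt n i : (n < i)%N -> (B n)`_i = 0.
Proof. by move=> lt_ni; apply: nth_default; rewrite (monicB n).2. Qed.

Lemma MPS_eq_Xn n : (forall i, (i < n)%N -> (B n)`_i = 0) -> B n = 'X^n.
Proof.
move=> lowB; apply/polyP => i; rewrite coefXn.
have [lt_in|gt_in|->] := ltngtP i n; last by rewrite coefB_diag.
  by rewrite lowB // (ltn_eqF lt_in).
by rewrite coefB_gt // eq_sym (ltn_eqF gt_in).
Qed.

Lemma size_sub_coefB (q : {poly F}) m :
  (size q <= m.+1)%N -> (size (q - q`_m *: B m)%R <= m)%N.
Proof.
move=> szq; apply/leq_sizeP => j; rewrite leq_eqVlt => /predU1P[<-|lt_mj].
  by rewrite coefB coefZ coefB_diag mulr1 subrr.
by rewrite coefB coefZ coefB_gt // mulr0 subr0; apply: (leq_sizeP _ _ szq).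
Qed.

Hypothesis orthB : forall n m, n <> m -> u (B n * B m) = 0.
Hypothesis normB : forall n, u (B n * B n) != 0.

Lemma u_mulB_sub (q : {poly F}) c m n :
  m <> n -> u ((q - c *: B m) * B n) = u (q * B n).
Proof. by move=> ne_mn; rewrite mulrBl linearB -scalerAl linearZ /= orthB // scaler0 subr0. Qed.

Lemma u_mulB_size_lt n (q : {poly F}) : (size q <= n)%N -> u (q * B n) = 0.
Proof.
suff: forall m (q : {poly F}), (size q <= m)%N -> (m <= n)%N -> u (q * B n) = 0 by apply.
elim=> [|m IH] {}q szq le_mn.
  by move: szq; rewrite leqn0 size_poly_eq0 => /eqP ->; rewrite mul0r raddf0.
rewrite -(@u_mulB_sub q q`_m m); last by lia.
exact: IH (size_sub_coefB szq) (ltnW le_mn).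
Qed.

Lemma orth_lower_eq0 m (p : {poly F}) :
  (size p <= m)%N -> (forall j, (j < m)%N -> u (p * B j) = 0) -> p = 0.
Proof.
elim: m p => [|m IH] p szp orth_p.
  by move: szp; rewrite leqn0 size_poly_eq0 => /eqP.
have p_eq : p = p`_m *: B m.
  apply/eqP; rewrite -subr_eq0; apply/eqP/IH; first exact: size_sub_coefB.
  by move=> j lt_jm; rewrite u_mulB_sub ?orth_p //; lia.
have /eqP := orth_p m (ltnSn m).
rewrite p_eq -scalerAl linearZ /= mulf_eq0 (negbTE (normB m)) orbF => /eqP->.
by rewrite scale0r.
Qed.

Definition beta n := ('X * B n.+1 - B n.+2)`_n.+1.
Definition gamma n := ('X * B n.+1 - B n.+2 - beta n *: B n.+1)`_n.

Lemma three_term n : 'X * B n.+1 = B n.+2 + beta n *: B n.+1 + gamma n *: B n.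
Proof.
have size_XB j : (size ('X * B j)%R <= j.+2)%N.
  by apply: leq_trans (size_polyMleq _ _) _; rewrite size_polyX (monicB j).2.
have sz0 : (size ('X * B n.+1 - B n.+2)%R <= n.+2)%N.
  by have := size_sub_coefB (size_XB n.+1); rewrite coefXM coefB_diag scale1r.
pose q := 'X * B n.+1 - B n.+2 - beta n *: B n.+1.
have /orth_lower_eq0 q_eq0 : (size (q - gamma n *: B n)%R <= n)%N.
  exact/size_sub_coefB/size_sub_coefB.
have {}q_eq0 : q - gamma n *: B n = 0.
  apply: q_eq0 => j lt_jn; rewrite !u_mulB_sub; try lia.
  rewrite mulrBl linearB orthB ?subr0; last by lia.
  by rewrite mulrAC u_mulB_size_lt // (leq_trans (size_XB j)).
by apply/eqP; rewrite -subr_eq0 -q_eq0 /q; apply/eqP; ring.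
Qed.

Lemma betaE n : beta n = (B n.+1)`_n - (B n.+2)`_n.+1.
Proof. by rewrite /beta coefB coefXM. Qed.

Lemma gammaE n :
  gamma n.+1 = (B n.+2)`_n - (B n.+3)`_n.+1 - beta n.+1 * (B n.+2)`_n.+1.
Proof. by rewrite /gamma !coefB coefZ coefXM. Qed.

End OrthogonalMPS.

Section LambdaAppell.

Variables (a0 a1 a2 : C).

Definition lam (m : nat) : C := m%:R * (fpoly a0 a1 a2).[m%:R].

Lemma lamE m : lam m = m%:R * (a0 + a1 * m%:R + a2 * m%:R ^+ 2).
Proof. by rewrite /lam /fpoly !hornerE. Qed.

Lemma coef_Lambda p i : (Lambda a0 a1 a2 p)`_i = lam i.+1 * p`_i.+1.
Proof. by rewrite /Lambda !coefD !coefZ !(coef_deriv, coefXM) /= lamE; ring. Qed.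

(* The comparison of coefficients three (resp. four) places below the diagonal
   in the three-term recurrence (for rel4, once alpha_1 = 0), divided by its
   nonvanishing lam factors. *)
Definition rel3 (x1 x2 x3 : C) m :=
  x3 * (lam m.+1 - lam m.+4) - x1 * x2 * (lam m.+3 - lam m.+4)
  - x1 * x2 * (lam m.+2 - lam m.+4) + x1 ^+ 3 * (lam m.+3 - lam m.+4).

Definition rel4 (x2 x4 : C) m :=
  x4 * (lam m.+1 - lam m.+4.+1) - x2 ^+ 2 * (lam m.+3 - lam m.+4.+1).

Section QuadraticRelations.

Hypothesis a2_neq0 : a2 != 0.

Lemma natr_mul_a2_neq0 n : (n.+1)%:R * a2 != 0.
Proof. by rewrite mulf_neq0 ?pnatr_eq0. Qed.

(* As functions of m, rel3 and rel4 are quadratic (differences of the cubic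
   lam), so their values at m = 0, 1, 2 determine them; the combinations below
   are finite differences isolating their coefficients. *)
Lemma rel3_eq0 x1 x2 x3 :
  rel3 x1 x2 x3 0%N = 0 -> rel3 x1 x2 x3 1%N = 0 -> rel3 x1 x2 x3 2%N = 0 -> x1 = 0.
Proof.
move=> e0 e1 e2.
have T0 : 3%:R * x3 - 3%:R * x1 * x2 + x1 ^+ 3 = 0.
  apply: (mulfI (natr_mul_a2_neq0 5%N)); rewrite mulr0.
  transitivity (- (rel3 x1 x2 x3 0%N - 2%:R * rel3 x1 x2 x3 1%N + rel3 x1 x2 x3 2%N)).
    by rewrite /rel3 !lamE; ring.
  by rewrite e0 e1 e2; ring.
have U0 : 2%:R * x1 * x2 - x1 ^+ 3 = 0.
  apply: (mulfI (natr_mul_a2_neq0 17%N)); rewrite mulr0.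
  transitivity (3%:R * (rel3 x1 x2 x3 1%N - rel3 x1 x2 x3 0%N)
     + (3%:R * x3 - 3%:R * x1 * x2 + x1 ^+ 3) * (54%:R * a2 + 6%:R * a1)).
    by rewrite /rel3 !lamE; ring.
  by rewrite e0 e1 T0; ring.
have V0 : x1 * x2 = 0.
  apply: (mulfI (natr_mul_a2_neq0 5%N)); rewrite mulr0.
  transitivity (- 3%:R * rel3 x1 x2 x3 0%N
     - (3%:R * x3 - 3%:R * x1 * x2 + x1 ^+ 3) * (63%:R * a2 + 15%:R * a1 + 3%:R * a0)
     + (2%:R * x1 * x2 - x1 ^+ 3) * (48%:R * a2 + 6%:R * a1)).
    by rewrite /rel3 !lamE; ring.
  by rewrite e0 T0 U0; ring.
by move: U0; rewrite -mulrA V0 mulr0 sub0r => /eqP; rewrite oppr_eq0 expf_eq0 => /eqP.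
Qed.

Lemma rel4_eq0 x2 x4 :
  rel4 x2 x4 0%N = 0 -> rel4 x2 x4 1%N = 0 -> rel4 x2 x4 2%N = 0 -> x2 = 0.
Proof.
move=> e0 e1 e2.
have V0 : x2 ^+ 2 - 2%:R * x4 = 0.
  apply: (mulfI (natr_mul_a2_neq0 11%N)); rewrite mulr0.
  transitivity (rel4 x2 x4 0%N - 2%:R * rel4 x2 x4 1%N + rel4 x2 x4 2%N).
    by rewrite /rel4 !lamE; ring.
  by rewrite e0 e1 e2; ring.
have x4_0 : x4 = 0.
  apply: (mulfI (natr_mul_a2_neq0 23%N)); rewrite mulr0.
  transitivity (rel4 x2 x4 1%N - rel4 x2 x4 0%N
     - (x2 ^+ 2 - 2%:R * x4) * (4%:R * a1 + 54%:R * a2)).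
    by rewrite /rel4 !lamE; ring.
  by rewrite e0 e1 V0; ring.
by move: V0; rewrite x4_0 mulr0 subr0 => /eqP; rewrite expf_eq0 => /eqP.
Qed.

End QuadraticRelations.

Hypothesis f_nonroot : forall n, (0 < n)%N -> ~~ root (fpoly a0 a1 a2) n%:R.

Lemma lam_neq0 m : (0 < m)%N -> lam m != 0.
Proof. by move=> m_gt0; rewrite mulf_neq0 ?f_nonroot // pnatr_eq0 -lt0n. Qed.

Fixpoint lam_ff (k n : nat) : C :=
  if k is k'.+1 then lam n * lam_ff k' n.-1 else 1.

Lemma lam_ff_neq0 k n : (k <= n)%N -> lam_ff k n != 0.
Proof.
elim: k n => [|k IH] n le_kn /=; first exact: oner_neq0.
by rewrite mulf_neq0 ?lam_neq0 ?IH //; lia.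
Qed.

Lemma lam_ffSr k n : lam_ff k.+1 n = lam_ff k n * lam (n - k).
Proof.
elim: k n => [|k IH] n; first by rewrite /= mul1r mulr1 subn0.
rewrite -[LHS]/(lam n * lam_ff k.+1 n.-1) IH -[lam_ff k.+1 n]/(lam n * lam_ff k n.-1).
by rewrite mulrA; congr (_ * lam _); lia.
Qed.

Lemma lam_ff_shift k n : lam_ff k n.+1 * lam (n.+1 - k) = lam n.+1 * lam_ff k n.
Proof.
by case: k => [|k]; rewrite ?mul1r ?mulr1 ?subn0 // [lam_ff k.+1 _]/= -mulrA -lam_ffSr.
Qed.

Variable B : nat -> {poly C}.
Hypothesis appellB : Lambda_Appell a0 a1 a2 B.

Definition alpha k := (B k)`_0 / lam_ff k k.

Lemma appell_coef k m : (B (k + m))`_m = alpha k * lam_ff k (k + m).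
Proof.
elim: m => [|m IH]; first by rewrite addn0 divfK // lam_ff_neq0.
apply: (mulfI (lam_neq0 (ltn0Sn m))); rewrite addnS.
have := congr1 (coefp m) (appellB (k + m)).
rewrite /= coef_Lambda coefZ IH -[rho _ _ _ _]/(lam (k + m).+1) => ->.
rewrite mulrCA -lam_ff_shift (_ : (k + m).+1 - k = m.+1)%N; [ring | lia].
Qed.

Lemma appell_coef_sub n i : (i <= n)%N -> (B n)`_i = alpha (n - i) * lam_ff (n - i) n.
Proof. by move=> le_in; rewrite -{1 4}(subnK le_in) appell_coef. Qed.

Hypothesis monicB : MPS B.

Lemma appell_eq_Xn n : (forall k, (0 < k <= n)%N -> alpha k = 0) -> B n = 'X^n.
Proof.
move=> alpha0; apply: MPS_eq_Xn => // i lt_in.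
by rewrite -(subnK (ltnW lt_in)) appell_coef alpha0 ?mul0r //; lia.
Qed.

Variable u : {linear {poly C} -> C^o}.
Hypothesis orthB : forall n m, n <> m -> u (B n * B m) = 0.
Hypothesis normB : forall n, u (B n * B n) != 0.

Lemma appell_three_term k m :
  alpha k.+2 * (lam_ff k.+2 (k + m).+2 - lam_ff k.+2 (k + m).+3) =
  beta B (k + m).+1 * alpha k.+1 * lam_ff k.+1 (k + m).+2
  + gamma B (k + m).+1 * alpha k * lam_ff k (k + m).+1.
Proof.
have h := congr1 (coefp m.+1) (three_term monicB orthB normB (k + m).+1).
rewrite /= !coefD !coefZ coefXM /= !appell_coef_sub in h; try lia.
rewrite !subSS !subSn ?leq_addl ?leqW ?leq_addl // addnK in h.
by rewrite mulrBr h; ring.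
Qed.

Lemma beta_alpha n : beta B n = alpha 1%N * (lam n.+1 - lam n.+2).
Proof. by rewrite betaE !appell_coef_sub // !subSnn /=; ring. Qed.

Lemma gamma_alpha n :
  gamma B n.+1 = alpha 2%N * (lam n.+2 * lam n.+1 - lam n.+3 * lam n.+2)
                 - beta B n.+1 * alpha 1%N * lam n.+2.
Proof.
rewrite gammaE !appell_coef_sub; try lia.
by rewrite !subSS !subSn ?leqnn ?leqnSn // subnn /=; ring.
Qed.

Lemma appell_rel3 m : rel3 (alpha 1%N) (alpha 2%N) (alpha 3%N) m = 0.
Proof.
have h := appell_three_term 1%N m.
rewrite add1n /= gamma_alpha !beta_alpha in h.
have /eqP := h; rewrite -subr_eq0 => /eqP h0.
apply: (mulfI (lam_neq0 (ltn0Sn m.+2))); apply: (mulfI (lam_neq0 (ltn0Sn m.+1))).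
by rewrite !mulr0 -[in RHS]h0 /rel3; ring.
Qed.

Lemma appell_rel4 m : alpha 1%N = 0 -> rel4 (alpha 2%N) (alpha 4%N) m = 0.
Proof.
move=> alpha1_0; have h := appell_three_term 2%N m.
rewrite add2n /= gamma_alpha !beta_alpha alpha1_0 in h.
have /eqP := h; rewrite -subr_eq0 => /eqP h0.
apply: (mulfI (lam_neq0 (ltn0Sn m.+3))); apply: (mulfI (lam_neq0 (ltn0Sn m.+2))).
apply: (mulfI (lam_neq0 (ltn0Sn m.+1))).
by rewrite !mulr0 -[in RHS]h0 /rel4; ring.
Qed.

End LambdaAppell.

Theorem theorem3 (a0 a1 a2 : C) :
  a2 != 0 ->
  (forall n : nat, (0 < n)%N -> ~~ root (fpoly a0 a1 a2) n%:R) ->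
  ~ (exists B : nat -> {poly C},
        MPS B /\ Lambda_Appell a0 a1 a2 B /\ orthogonal_MPS B).
Proof.
move=> a2_neq0 f_nonroot [B [monicB [appellB [u [orthB normB]]]]].
have rel3_0 := appell_rel3 f_nonroot appellB monicB orthB normB.
have alpha1_0 := rel3_eq0 a2_neq0 (rel3_0 0%N) (rel3_0 1%N) (rel3_0 2%N).
have rel4_0 m := appell_rel4 f_nonroot appellB monicB orthB normB m alpha1_0.
have alpha2_0 := rel4_eq0 a2_neq0 (rel4_0 0%N) (rel4_0 1%N) (rel4_0 2%N).
have B_Xn n : (n <= 2)%N -> B n = 'X^n.
  move=> le_n2; apply: (appell_eq_Xn f_nonroot appellB monicB) => k /andP[k_gt0 le_kn].
  by case: k k_gt0 le_kn => [|[|[|k]]] //; lia.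
have B11 : B 1%N * B 1%N = B 2%N * B 0%N by rewrite !B_Xn // -!exprD.
by have := normB 1%N; rewrite B11 orthB ?eqxx.
Qed.
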